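(* Let $\alpha>\frac12$ and run Algorithm 1 with $x_0=0$, gradients satisfying $\|g_t\|\le G$, and learning rates $\eta_t=\frac{1}{Gt^\alpha}$. Then for every $T\ge0$, $$S_T\le\sqrt{5+\tfrac{1}{2\alpha-1}},\qquad Q_T\le\ln\Big(5+\tfrac{1}{2\alpha-1}\Big),$$ and for every $T\ge1$ and $u\in\mathbb{R}^d$, $$\phi_T(u)\le\sqrt{5+\tfrac{1}{2\alpha-1}}\;\|u\|\Big[2\ln(1+2\|u\|)+9\sqrt{5+\tfrac{1}{2\alpha-1}}\Big].$$
   Context: $\|\cdot\|$ is the Euclidean norm, $G>0$. Auxiliary functions: $\psi^*(\theta,S,Q)=\exp\big(\max_{\beta\in[-1/2,1/2]}(\theta\beta-\beta^2S^2)-Q\big)$ for $\theta\in\mathbb{R},S>0,Q\ge0$; $\psi(x,S,Q)=\sup_{\theta\in\mathbb{R}}(\theta x-\psi^*(\theta,S,Q))$. Algorithm 1 with $x_0=0$: $S_0^2=4$, $Q_0=0$, $\theta_0=0$. For $t=1,2,\dots$: $\phi_t(x)=\psi(\|x\|,S_{t-1},Q_{t-1})$; $x_t$ is the unique minimizer of $\phi_t(x)-\langle\theta_{t-1},x\rangle$; receive $g_t$; $\ell_t=\eta_tg_t$, $S_t^2=S_{t-1}^2+\|\ell_t\|^2$ ($S_t>0$), $Q_t=Q_{t-1}+\|\ell_t\|^2/S_t^2$, $\theta_t=\theta_{t-1}-\ell_t$. *)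

From HB Require Import structures.
From mathcomp Require Import all_boot all_order all_algebra.
From mathcomp Require Import all_classical all_reals all_analysis.
Set Implicit Arguments. Unset Strict Implicit. Unset Printing Implicit Defensive.
Import Order.TTheory GRing.Theory Num.Theory.
Local Open Scope classical_set_scope.
Local Open Scope ring_scope.

Section Defs.
Variable R : realType.

Definition enorm (d : nat) (v : 'rV[R]_d) : R :=
  Num.sqrt (\sum_(i < d) v 0 i ^+ 2).

Definition psistar (theta S Q : R) : R :=
  expR (sup [set theta * b - b ^+ 2 * S ^+ 2 | b in
               [set b : R | - (2^-1) <= b <= 2^-1]] - Q).

Definition psi (x S Q : R) : R :=
  sup [set theta * x - psistar theta S Q | theta in [set: R]].

Definition eta (G alpha : R) (t : nat) : R := (G * (t%:R `^ alpha))^-1.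

Definition ell (d : nat) (G alpha : R) (g : nat -> 'rV[R]_d) (t : nat) : 'rV[R]_d :=
  eta G alpha t *: g t.

Fixpoint SQ (d : nat) (G alpha : R) (g : nat -> 'rV[R]_d) (t : nat) : R * R :=
  match t with
  | 0%N => (4, 0)
  | t'.+1 =>
      let p := SQ G alpha g t' in
      let s2 := p.1 + enorm (ell G alpha g t) ^+ 2 in
      (s2, p.2 + enorm (ell G alpha g t) ^+ 2 / s2)
  end.

Definition S (d : nat) (G alpha : R) (g : nat -> 'rV[R]_d) (t : nat) : R :=
  Num.sqrt (SQ G alpha g t).1.
Definition Q (d : nat) (G alpha : R) (g : nat -> 'rV[R]_d) (t : nat) : R :=
  (SQ G alpha g t).2.

Definition phi (d : nat) (G alpha : R) (g : nat -> 'rV[R]_d) (t : nat)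
  (x : 'rV[R]_d) : R :=
  psi (enorm x) (S G alpha g t.-1) (Q G alpha g t.-1).

End Defs.

From Pilot Require Import Defs.
From HB Require Import structures.
From mathcomp Require Import all_boot all_order all_algebra.
From mathcomp Require Import all_classical all_reals all_analysis.
From mathcomp Require Import ring lra.
Set Implicit Arguments. Unset Strict Implicit. Unset Printing Implicit Defensive.
Import Order.TTheory GRing.Theory Num.Theory.
Local Open Scope ring_scope.

(* Let r = 2 alpha - 1 > 0 and M = 5 + 1/r.  Since ||ell_t||^2 <= t^(-2 alpha) and the telescoping bound
     (a+1)^(-(r+1)) <= (a^(-r) - (a+1)^(-r))/r holds, the sums give
     S_T^2 <= 5 + (1 - T^(-r))/r <= M.  Independently of the learning rates,
     each increment ||ell||^2/S_t^2 of Q is at most ln S_t^2 - ln S_(t-1)^2,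
     so Q_T <= ln S_T^2 - ln 4 <= ln M.
   - Potential.  Taking beta = 1/2 in psi^* gives psi^*(th,S,Q) >=
     exp(th/2 - S^2/4 - Q); the Fenchel conjugate of th |-> e^(th/2 - c) at x
     is 2x(c + ln(2x) - 1), which with S^2 <= M and Q <= ln M <= M - 1 yields
     psi(x,S,Q) <= sqrt M x (2 ln(1+2x) + 9 sqrt M).
   - The theorem combines both parts, phi_T being psi at (S_(T-1), Q_(T-1)). *)

Section Elementary.
Variable R : realType.

(* t^(-r) for t > 0, written through the logarithm; it equals 1 at t = 0. *)
Definition inv_pow (r t : R) : R := expR (- r * ln t).

Lemma ln_le_subr1 (y : R) : 0 < y -> ln y <= y - 1.
Proof.
move=> y_gt0; have := @le_ln1Dx R (y - 1).
have -> : 1 + (y - 1) = y by ring.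
apply; lra.
Qed.

(* The relative increment a/(s+a) is dominated by the logarithmic increment;
   this controls both the growth of Q_t and the tail of sum t^(-2 alpha). *)
Lemma frac_le_ln_ratio (s a : R) : 0 < s -> 0 <= a ->
  a / (s + a) <= ln (s + a) - ln s.
Proof.
move=> s_gt0 a_ge0; have sa_gt0 : 0 < s + a by lra.
have := ln_le_subr1 (divr_gt0 s_gt0 sa_gt0).
rewrite ln_div ?posrE //.
have -> : s / (s + a) - 1 = - (a / (s + a)) by field; lra.
lra.
Qed.

Lemma inv_pow_telescope (r a : R) : 0 < r -> 0 < a ->
  inv_pow (r + 1) (a + 1) <= (inv_pow r a - inv_pow r (a + 1)) / r.
Proof.
move=> r_gt0 a_gt0; rewrite /inv_pow.
set w1 := expR (- r * ln (a + 1)); set u := ln (a + 1) - ln a.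
have w1_gt0 : 0 < w1 by apply: expR_gt0.
have u_ge : (a + 1)^-1 <= u.
  by have := @frac_le_ln_ratio a 1 a_gt0 ler01; rewrite div1r.
have -> : expR (- r * ln a) = w1 * expR (r * u).
  by rewrite /w1 -expRD /u; congr expR; ring.
have -> : expR (- (r + 1) * ln (a + 1)) = w1 * (a + 1)^-1.
  have -> : - (r + 1) * ln (a + 1) = - r * ln (a + 1) + - ln (a + 1) by ring.
  by rewrite expRD expRN lnK // posrE; lra.
rewrite ler_pdivlMr //.
have exp_lin : w1 + w1 * r * u <= w1 * expR (r * u).
  have -> : w1 + w1 * r * u = w1 * (1 + r * u) by ring.
  by rewrite ler_pM2l // expR_ge1Dx.
have u_lin : w1 * (a + 1)^-1 * r <= w1 * r * u.
  by rewrite -mulrA [_^-1 * r]mulrC mulrA ler_pM2l // mulr_gt0.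
lra.
Qed.

End Elementary.

Section Potential.
Variable R : realType.

(* Choosing beta = 1/2 in the maximum defining psi^*. *)
Lemma psistar_ge (th s q : R) :
  expR (th * 2^-1 - 2^-1 ^+ 2 * s ^+ 2 - q) <= psistar th s q.
Proof.
rewrite /psistar ler_expR lerD2r.
have half_in : - 2^-1 <= (2^-1 : R) <= 2^-1 by apply/andP; split; lra.
apply: sup_upper_bound; last by exists 2^-1.
split; first by eexists; exists 2^-1.
exists `|th|; move=> _ [b /andP [b_ge b_le] <-].
have th_b : th * b <= `|th|.
  by case: (lerP 0 th) => h; [rewrite ger0_norm | rewrite ltr0_norm]; nra.
have : 0 <= b ^+ 2 * s ^+ 2 by rewrite mulr_ge0 // sqr_ge0.
lra.
Qed.

(* Fenchel-type bound for the exponential: th x - e^(th/2 - c) is at most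
   2x (c + ln (2x) - 1), with equality when e^(th/2 - c) = 2x. *)
Lemma exp_conjugate_le (th c x : R) : 0 < x ->
  th * x - expR (th * 2^-1 - c) <= 2 * x * (c + ln (2 * x) - 1).
Proof.
move=> x_gt0; have x2_pos : 2 * x \in Num.pos by rewrite posrE; lra.
set z := th * 2^-1 - c - ln (2 * x).
have -> : expR (th * 2^-1 - c) = 2 * x * expR z.
  by rewrite -{1}(lnK x2_pos) -expRD /z; congr expR; ring.
have : 2 * x * (1 + z) <= 2 * x * expR z by rewrite ler_pM2l ?expR_ge1Dx //; lra.
have -> : 2 * x * (1 + z) = th * x - 2 * x * (c + ln (2 * x) - 1) by rewrite /z; field.
lra.
Qed.

Lemma psi_le (x s q M : R) : 0 <= x -> 0 <= s -> s <= M -> q <= ln M -> 1 <= M ->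
  psi x (Num.sqrt s) q <= Num.sqrt M * x * (2 * ln (1 + 2 * x) + 9 * Num.sqrt M).
Proof.
move=> x_ge0 s_ge0 s_le q_le M_ge1; rewrite /psi; apply: ge_sup.
  by exists (0 * x - psistar 0 (Num.sqrt s) q), 0.
move=> _ [th _ <-].
have := psistar_ge th (Num.sqrt s) q; rewrite sqr_sqrtr //.
suff : th * x - expR (th * 2^-1 - (2^-1 ^+ 2 * s + q)) <=
    Num.sqrt M * x * (2 * ln (1 + 2 * x) + 9 * Num.sqrt M).
  by rewrite opprD addrA; lra.
have [->|x_neq0] := eqVneq x 0.
  by rewrite !(mulr0, mul0r) add0r oppr_le0 expR_ge0.
have x_gt0 : 0 < x by rewrite lt_neqAle eq_sym x_neq0.
apply: le_trans (exp_conjugate_le th (2^-1 ^+ 2 * s + q) x_gt0) _.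
set m := Num.sqrt M.
have m_ge1 : 1 <= m by rewrite -sqrtr1 ler_sqrt; lra.
have mM : m ^+ 2 = M by rewrite sqr_sqrtr //; lra.
have lnM_le := ln_le_subr1 (lt_le_trans ltr01 M_ge1).
have ln2x_le : ln (2 * x) <= ln (1 + 2 * x) by rewrite ler_ln ?posrE; lra.
have ln_nonneg : 0 <= ln (1 + 2 * x) by apply: ln_ge0; lra.
have c_le : 2^-1 ^+ 2 * s + q - 1 <= (2^-1 ^+ 2 + 1) * m ^+ 2 - 2.
  have : 2^-1 ^+ 2 * s <= 2^-1 ^+ 2 * M by rewrite ler_pM2l //; lra.
  rewrite mM; lra.
have ln_le_mln : ln (1 + 2 * x) <= m * ln (1 + 2 * x) by rewrite ler_peMl.
have -> : m * x * (2 * ln (1 + 2 * x) + 9 * m) =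
  2 * x * (m * ln (1 + 2 * x) + 9 / 2 * m ^+ 2) by field.
rewrite ler_pM2l; last lra.
have : 1 <= m ^+ 2 by rewrite mM.
lra.
Qed.

End Potential.

Section Norm.
Variables (R : realType) (d : nat).

Lemma enorm_ge0 (v : 'rV[R]_d) : 0 <= enorm v.
Proof. exact: sqrtr_ge0. Qed.

Lemma enorm_sq (v : 'rV[R]_d) : enorm v ^+ 2 = \sum_(i < d) v 0 i ^+ 2.
Proof. by rewrite sqr_sqrtr // sumr_ge0 // => i _; rewrite sqr_ge0. Qed.

Lemma enormZ_sq (c : R) (v : 'rV[R]_d) : enorm (c *: v) ^+ 2 = c ^+ 2 * enorm v ^+ 2.
Proof. by rewrite !enorm_sq mulr_sumr; apply: eq_bigr => i _; rewrite mxE exprMn. Qed.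

End Norm.

Section Algorithm.
Variables (R : realType) (d : nat) (G alpha : R) (g : nat -> 'rV[R]_d).

Lemma SQ1_ge4 (t : nat) : 4 <= (SQ G alpha g t).1.
Proof.
elim: t => [|t IH] /=; first by [].
have : 0 <= enorm (ell G alpha g t.+1) ^+ 2 by rewrite sqr_ge0.
lra.
Qed.

Lemma Q_le_ln_growth (t : nat) : Q G alpha g t <= ln (SQ G alpha g t).1 - ln 4.
Proof.
rewrite /Q; elim: t => [|t IH] /=; first by rewrite subrr.
have s_gt0 : 0 < (SQ G alpha g t).1 by apply: lt_le_trans (SQ1_ge4 t).
have := frac_le_ln_ratio s_gt0 (sqr_ge0 (enorm (ell G alpha g t.+1))).
lra.
Qed.

Hypotheses (G_gt0 : 0 < G) (g_le : forall t : nat, (0 < t)%N -> enorm (g t) <= G).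

Lemma ell_sq_le (t : nat) : (0 < t)%N ->
  enorm (ell G alpha g t) ^+ 2 <= inv_pow (2 * alpha) t%:R.
Proof.
move=> t_gt0; rewrite enormZ_sq.
set E := expR (alpha * ln t%:R).
have E_gt0 : 0 < E by apply: expR_gt0.
have powE : t%:R `^ alpha = E.
  by rewrite /powR ifF //; apply/negbTE; rewrite pnatr_eq0 -lt0n.
have -> : inv_pow (2 * alpha) t%:R = Defs.eta G alpha t ^+ 2 * G ^+ 2.
  rewrite /inv_pow /Defs.eta powE.
  have -> : - (2 * alpha) * ln t%:R = - (alpha * ln t%:R) + - (alpha * ln t%:R) by ring.
  by rewrite expRD expRN -/E; field; rewrite !gt_eqF.
rewrite ler_wpM2l ?sqr_ge0 // lerXn2r ?nnegrE ?enorm_ge0 ?g_le //.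
exact: ltW.
Qed.

Hypothesis alpha_gt : 2^-1 < alpha.

Lemma exponent_gap_gt0 : 0 < 2 * alpha - 1.
Proof.
have : 2 * 2^-1 = 1 :> R by rewrite divff // pnatr_eq0.
by move: alpha_gt; nra.
Qed.

Lemma SQ1_le (T : nat) :
  (SQ G alpha g T).1 <= 5 + (1 - inv_pow (2 * alpha - 1) T%:R) / (2 * alpha - 1).
Proof.
have r_gt0 := exponent_gap_gt0; set r := 2 * alpha - 1 in r_gt0 *.
elim: T => [|T IH] /=.
  by rewrite /inv_pow ln0 // mulr0 expR0 subrr mul0r addr0; lra.
have := ell_sq_le (ltn0Sn T).
case: T => [|T] in IH *.
  by rewrite /inv_pow ln1 !mulr0 expR0 subrr mul0r addr0 /= => ell1; lra.
have T1_gt0 : 0 < T.+1%:R :> R by rewrite ltr0n.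
have := inv_pow_telescope r_gt0 T1_gt0.
rewrite -[T.+2%:R]natr1 (_ : r + 1 = 2 * alpha); last by rewrite /r; ring.
have -> : (1 - inv_pow r (T.+1%:R + 1)) / r =
  (1 - inv_pow r T.+1%:R) / r + (inv_pow r T.+1%:R - inv_pow r (T.+1%:R + 1)) / r.
  by field; lra.
lra.
Qed.

End Algorithm.

Theorem lemma5 (R : realType) (d : nat) (G alpha : R) (g : nat -> 'rV[R]_d)
  (hG : 0 < G) (halpha : 2^-1 < alpha)
  (hg : forall t : nat, (0 < t)%N -> enorm (g t) <= G) :
  (forall T : nat,
      S G alpha g T <= Num.sqrt (5 + (2 * alpha - 1)^-1) /\
      Q G alpha g T <= ln (5 + (2 * alpha - 1)^-1)) /\
  (forall (T : nat) (u : 'rV[R]_d), (1 <= T)%N ->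
      phi G alpha g T u <=
        Num.sqrt (5 + (2 * alpha - 1)^-1) * enorm u *
        (2 * ln (1 + 2 * enorm u) + 9 * Num.sqrt (5 + (2 * alpha - 1)^-1))).
Proof.
set r := 2 * alpha - 1; set M := 5 + r^-1.
have r_gt0 : 0 < r := exponent_gap_gt0 halpha.
have M_ge5 : 5 <= M by rewrite /M ler_wpDr // invr_ge0 ltW.
have s2_le (T : nat) : (SQ G alpha g T).1 <= M.
  have := SQ1_le hG hg halpha T; rewrite -/r mulrBl mul1r.
  have : 0 < inv_pow r T%:R / r by rewrite divr_gt0 // expR_gt0.
  by rewrite /M; lra.
have Q_le (T : nat) : Q G alpha g T <= ln M.
  have := Q_le_ln_growth G alpha g T.
  have : ln (SQ G alpha g T).1 <= ln M.
    by rewrite ler_ln ?posrE ?s2_le //; [apply: lt_le_trans (SQ1_ge4 _ _ _ T) | lra].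
  have : 0 <= ln (4 : R) by apply: ln_ge0; lra.
  lra.
split=> [T | T u _]; first by split; rewrite // /S ler_sqrt ?s2_le //; lra.
apply: psi_le; rewrite ?enorm_ge0 ?s2_le ?Q_le //; last lra.
exact: le_trans (SQ1_ge4 _ _ _ _).
Qed.
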